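(* Let $X$ be a topological space and let $(x_n)_{n\in\omega}$ be a sequence of pairwise distinct points of $X$ such that the subspace $\{x_n : n\in\omega\}$ is homeomorphic to $\mathbb{Q}$. Fix a metric $d$ on $\{x_n:n\in\omega\}$ compatible with its subspace topology. Call $A\subseteq\omega$ scattered if there is no $B\subseteq A$ such that the subspace $\{x_n:n\in B\}$ is homeomorphic to $\mathbb{Q}$; let $\mathcal{I}$ be the family of scattered subsets of $\omega$ and $\mathcal{I}^+=\mathcal{P}(\omega)\setminus\mathcal{I}$. For $i,j\in\omega$ let $A_{i,j}=\{n\in\omega : d(x_n,x_i)<\frac{1}{j+1}\}$. Then: (1) for every $A\subseteq\omega$, $A\in\mathcal{I}^+$ if and only if there exists a nonempty $B\subseteq A$ such that for all $i\in B$ and all $j\in\omega$ there is $n\in B\cap A_{i,j}$ with $n\neq i$; (2) for every $A\in\mathcal{I}^+$ there exists $B\subseteq A$ with $B\in\mathcal{I}^+$ such that $B\cap A_{i,j}\in\mathcal{I}^+$ for all $i\in B$ and all $j\in\omega$.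
   Context: $\omega$ denotes the set of natural numbers and $\mathcal{P}(\omega)$ its power set. $\mathbb{Q}$ carries its usual topology. *)

From HB Require Import structures.
From mathcomp Require Import all_boot all_order all_algebra.
From mathcomp Require Import all_classical all_reals all_analysis.
Set Implicit Arguments. Unset Strict Implicit. Unset Printing Implicit Defensive.
Import Order.TTheory GRing.Theory Num.Theory.
Local Open Scope classical_set_scope.
Local Open Scope ring_scope.

Definition Q_open (U : set rat) : Prop :=
  forall q, U q -> exists e : rat, 0 < e /\ forall r : rat, `|r - q| < e -> U r.

Definition rel_open (X : topologicalType) (S U : set X) : Prop :=
  exists V : set X, open V /\ U = V `&` S.

Definition homeo_Q (X : topologicalType) (S : set X) : Prop :=
  exists (f : X -> rat) (g : rat -> X),
    (forall s, S s -> g (f s) = s) /\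
    (forall q, S (g q) /\ f (g q) = q) /\
    (forall U : set rat, Q_open U -> rel_open S (S `&` f @^-1` U)) /\
    (forall U : set X, rel_open S U -> U `<=` S -> Q_open (g @^-1` U)).

Definition metric_on (R : realType) (X : Type) (S : set X) (d : X -> X -> R) : Prop :=
  (forall a b, S a -> S b -> 0 <= d a b) /\
  (forall a b, S a -> S b -> d a b = 0 <-> a = b) /\
  (forall a b, S a -> S b -> d a b = d b a) /\
  (forall a b c, S a -> S b -> S c -> d a c <= d a b + d b c).

Definition compatible (R : realType) (X : topologicalType) (S : set X)
    (d : X -> X -> R) : Prop :=
  forall U : set X, U `<=` S ->
    (rel_open S U <->
     forall u, U u -> exists e : R, 0 < e /\ forall s, S s -> d u s < e -> U s).

Definition scattered (X : topologicalType) (x : nat -> X) (A : set nat) : Prop :=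
  ~ exists B : set nat, B `<=` A /\ homeo_Q (x @` B).

Definition Aij (R : realType) (X : Type) (x : nat -> X) (d : X -> X -> R)
    (i j : nat) : set nat :=
  [set n | d (x n) (x i) < (j.+1%:R)^-1].

From HB Require Import structures.
From mathcomp Require Import all_boot all_order all_algebra.
From mathcomp Require Import all_classical all_reals all_analysis.
From mathcomp Require Import lra.
Set Implicit Arguments. Unset Strict Implicit. Unset Printing Implicit Defensive.
Import Order.TTheory GRing.Theory Num.Theory.
Local Open Scope classical_set_scope.
Local Open Scope ring_scope.

(* A copy of Q has no isolated points, so a non-scattered set contains a
   nonempty crowded set (one without isolated points).  Conversely, a nonempty
   crowded set B contains a copy of Q: both Q and B realize one infinitely
   branching tree on the natural numbers, given by a parent map [pa] with
   [pa n < n], in which the points close to node [k] are exactly the nodes in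
   the subtrees of the late children of [k].  In Q, enumerated as [r], the
   parent of [n] is a rational [r p] that is adjacent to [r n] among the
   rationals and the irrational cut points already placed, and a new cut is
   placed between [r p] and [r n].  In B, the point of node [n] is chosen
   close to the point of its parent, much closer than any earlier point.
   Then [r n] and the point of node [n] correspond under a homeomorphism.
   Part (2) follows since a crowded set meets each open ball around one of its
   points in a nonempty crowded set. *)

Lemma nat_rec_choice (T : choiceType) (t0 : T) (P : (nat -> T) -> nat -> T -> Prop) :
  (forall f g n a, (forall j, (j < n)%N -> f j = g j) -> P f n a -> P g n a) ->
  (forall f n, (forall j, (j < n)%N -> P f j (f j)) -> exists a, P f n a) ->
  exists f, forall n, P f n (f n).
Proof.
move=> P_prefix P_ex.
pose fix build n : nat -> T :=
  if n is m.+1 then fun j => if j == m then xget t0 (P (build m) m) else build m j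
  else fun=> t0.
pose f n := build n.+1 n.
have build_f m j : (j < m)%N -> build m j = f j.
  elim: m => [//|m IH]; rewrite ltnS leq_eqVlt => /orP[/eqP->|jm] //=.
  by rewrite (ltn_eqF jm) IH.
exists f; elim/ltn_ind => n IH.
have fn : f n = xget t0 (P (build n) n) by rewrite /f /= eqxx.
apply: (P_prefix (build n)); first exact: build_f.
rewrite fn; apply: xgetPex; apply: P_ex => j jn.
rewrite build_f //; apply: (P_prefix f) => [i ij|]; last exact: IH.
by rewrite build_f // (ltn_trans ij jn).
Qed.

Section Tree.
Variable pa : nat -> nat.

Inductive descendant (c : nat) : nat -> Prop :=
| descendant_refl : descendant c c
| descendant_step w : (0 < w)%N -> descendant c (pa w) -> descendant c w.

Definition late_subtree (k M w : nat) :=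
  exists c, [/\ pa c = k, (M < c)%N & descendant c w].

Definition realizes_tree (F : numDomainType) (D : nat -> nat -> F) :=
  (forall k M, exists2 e, 0 < e & forall w, w <> k -> D k w < e -> late_subtree k M w) /\
  (forall k e, 0 < e -> exists M, forall w, late_subtree k M w -> D k w < e).

Lemma realizes_tree_continuous (F1 F2 : numDomainType)
    (D1 : nat -> nat -> F1) (D2 : nat -> nat -> F2) :
  realizes_tree D1 -> realizes_tree D2 -> (forall k, D2 k k = 0) ->
  forall k e, 0 < e -> exists2 e', 0 < e' & forall w, D1 k w < e' -> D2 k w < e.
Proof.
move=> [D1_late _] [_ D2_small] D2_refl k e e0.
have [M hM] := D2_small k e e0.
have [e' e'0 he'] := D1_late k M.
exists e' => // w D1w; have [->|wk] := eqVneq w k; first by rewrite D2_refl.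
by apply: hM; apply: he' => //; apply/eqP.
Qed.

Hypothesis pa_lt : forall m, (0 < m)%N -> (pa m < m)%N.

Lemma descendant_leq c w : descendant c w -> (c <= w)%N.
Proof. by elim=> // w' w0 _ IH; rewrite (leq_trans IH) // ltnW // pa_lt. Qed.

Lemma descendant0 w : descendant 0 w.
Proof.
elim/ltn_ind: w => w IH; have [->|w0] := posnP w; first exact: descendant_refl.
by apply: descendant_step => //; apply/IH/pa_lt.
Qed.

Lemma descendant_child a b : descendant a b -> b <> a ->
  exists c, [/\ pa c = a, (0 < c)%N & descendant c b].
Proof.
elim=> [//|b' b0 db IH] ba.
have [e|ne] := eqVneq (pa b') a; first by exists b'; split => //; apply: descendant_refl.
have [c [pc c0 dc]] := IH (elimN eqP ne).
by exists c; split => //; apply: descendant_step.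
Qed.

Lemma descendant_exit k w : (k < w)%N -> ~ descendant k w ->
  exists v, [/\ descendant v w, (k < v)%N & (pa v < k)%N].
Proof.
elim/ltn_ind: w => w IH kw not_dw; have w0 : (0 < w)%N by apply: leq_ltn_trans kw.
case: (ltngtP (pa w) k) => [pwk|kpw|pwk].
- by exists w; split => //; apply: descendant_refl.
- have [v [dv kv vk]] := IH _ (pa_lt w0) kpw (fun d => not_dw (descendant_step w0 d)).
  by exists v; split => //; apply: descendant_step.
- by case: not_dw; apply: descendant_step => //; rewrite pwk; apply: descendant_refl.
Qed.

End Tree.

Lemma exists_pos_lower_bound (F : realDomainType) (f : nat -> F) (P : nat -> Prop) n :
  (forall j, (j < n)%N -> P j -> 0 < f j) ->
  exists2 e, 0 < e & forall j, (j < n)%N -> P j -> e <= f j.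
Proof.
elim: n => [|n IH] f_pos; first by exists 1.
have [e e0 le_e] := IH (fun j jn => f_pos j (ltnW jn)).
have [Pn|nPn] := pselect (P n); last first.
  by exists e => // j; rewrite ltnS leq_eqVlt => /orP[/eqP->|/le_e].
exists (Num.min e (f n)); first by rewrite lt_min e0 f_pos.
move=> j; rewrite ltnS leq_eqVlt => /orP[/eqP->|jn] Pj; first by rewrite ge_min lexx orbT.
by rewrite ge_min le_e.
Qed.

Section CrowdedTree.
Variables (R : realType) (T : choiceType) (D : T -> T -> R).
Hypothesis D_ge0 : forall a b, 0 <= D a b.
Hypothesis D_sym : forall a b, D a b = D b a.
Hypothesis D_tri : forall a b c, D a c <= D a b + D b c.
Hypothesis D_eq0 : forall a b, D a b = 0 <-> a = b.

Definition crowded (B : set T) :=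
  forall a, B a -> forall e, 0 < e -> exists b, [/\ B b, b <> a & D a b < e].

Variable B : set T.
Hypothesis B_crowded : crowded B.
Variable pa : nat -> nat.
Hypothesis pa_lt : forall m, (0 < m)%N -> (pa m < m)%N.

Lemma D_gt0 a b : a <> b -> 0 < D a b.
Proof. by move=> ab; rewrite lt_neqAle D_ge0 andbT eq_sym; apply/eqP => /D_eq0. Qed.

(* The factor 8 leaves room for the triangle inequalities of
   [descendant_of_near]; the bound [1/(n+1)] makes late subtrees small. *)
Definition good_child (f : nat -> T) n a :=
  B a /\ ((0 < n)%N -> [/\ a <> f (pa n), D (f (pa n)) a < n.+1%:R^-1 &
    forall j, (j < n)%N -> j <> pa n -> 8 * D (f (pa n)) a < D (f (pa n)) (f j)]).

Lemma good_child_neq f n j : (forall i, (i <= n)%N -> good_child f i (f i)) ->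
  (j < n)%N -> f j <> f n.
Proof.
move=> good jn fj.
have [_ /(_ (leq_ltn_trans (leq0n j) jn)) [pn _ far]] := good n (leqnn n).
have [jp|/eqP jp] := eqVneq j (pa n); first by apply: pn; rewrite -fj jp.
by have := far j jn jp; rewrite fj; have := D_ge0 (f (pa n)) (f n); lra.
Qed.

Lemma good_child_exists b0 : B b0 -> forall f n,
  (forall j, (j < n)%N -> good_child f j (f j)) -> exists a, good_child f n a.
Proof.
move=> Bb0 f n good; have [->|n0] := posnP n; first by exists b0.
have [Bp _] := good _ (pa_lt n0).
have far_pos j : (j < n)%N -> j <> pa n -> 0 < D (f (pa n)) (f j) / 8.
  move=> jn jp; rewrite divr_gt0 // D_gt0 //.
  have good_le m : (m < n)%N -> forall i, (i <= m)%N -> good_child f i (f i).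
    by move=> mn i im; apply/good/(leq_ltn_trans im mn).
  case: (ltngtP j (pa n)) => [jpn|pnj|//].
  - exact: nesym (good_child_neq (good_le _ (pa_lt n0)) jpn).
  - exact: (good_child_neq (good_le _ jn) pnj).
have [e e0 le_e] := exists_pos_lower_bound (f := fun j => D (f (pa n)) (f j) / 8)
  (P := fun j => j <> pa n) far_pos.
have m0 : 0 < Num.min e n.+1%:R^-1 by rewrite lt_min e0 invr_gt0 ltr0Sn.
have [a [Ba ap Da]] := B_crowded Bp m0.
exists a; split => //; split=> // [|j jn jp]; first by move: Da; rewrite lt_min => /andP[].
move: Da (le_e j jn jp); rewrite lt_min => /andP[Dae _]; lra.
Qed.

Section GoodChoice.
Variable y : nat -> T.
Hypothesis y_good : forall n, good_child y n (y n).

Local Notation edge n := (D (y (pa n)) (y n)).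

Lemma good_inj : injective y.
Proof.
have neq n j : (j < n)%N -> y j <> y n := good_child_neq (fun i _ => y_good i).
move=> i j yij; case: (ltngtP i j) => [ij|ji|//]; first by case: (neq _ _ ij).
by case: (neq _ _ ji).
Qed.

Lemma edge_gt0 n : (0 < n)%N -> 0 < edge n.
Proof. by move=> n0; apply/D_gt0 => /good_inj pnn; move: (pa_lt n0); rewrite pnn ltnn. Qed.

Lemma edge_lt n : (0 < n)%N -> edge n < n.+1%:R^-1.
Proof. by move=> n0; have [_ /(_ n0) []] := y_good n. Qed.

Lemma edge_far n j : (0 < n)%N -> (j < n)%N -> j <> pa n -> 8 * edge n < D (y (pa n)) (y j).
Proof. by move=> n0; have [_ /(_ n0) [_ _]] := y_good n; apply. Qed.

Lemma edge_child n : (0 < n)%N -> (0 < pa n)%N -> 8 * edge n < edge (pa n).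
Proof.
move=> n0 p0; rewrite (D_sym (y (pa (pa n)))).
apply: edge_far => //; first exact: ltn_trans (pa_lt p0) (pa_lt n0).
by move=> ppp; move: (pa_lt p0); rewrite ppp ltnn.
Qed.

Lemma edge_le_dist_earlier k j : (0 < k)%N -> (j < k)%N -> edge k <= D (y k) (y j).
Proof.
move=> k0 jk; have [->|/eqP jp] := eqVneq j (pa k); first by rewrite D_sym.
have := edge_far k0 jk jp; have := D_tri (y (pa k)) (y k) (y j); have := edge_gt0 k0; lra.
Qed.

Lemma dist_descendant c w : (0 < c)%N -> descendant pa c w ->
  7 * D (y c) (y w) <= edge c - edge w.
Proof.
move=> c0; elim=> [|v v0 dv IH]; first by rewrite (D_eq0 _ _).2 //; lra.
have p0 : (0 < pa v)%N := leq_trans c0 (descendant_leq pa_lt dv).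
have := edge_child v0 p0; have := D_tri (y c) (y (pa v)) (y v); lra.
Qed.

Lemma dist_late_child k c w : pa c = k -> (0 < c)%N -> descendant pa c w ->
  D (y k) (y w) <= 2 * edge c /\ edge c <= 2 * D (y k) (y w).
Proof.
move=> <- c0 dw; have := dist_descendant c0 dw; have := D_ge0 (y (pa w)) (y w).
have := D_tri (y (pa c)) (y c) (y w); have := D_tri (y (pa c)) (y w) (y c).
have := D_sym (y w) (y c); split; lra.
Qed.

Lemma descendant_of_near k :
  exists2 eta, 0 < eta & forall w, D (y k) (y w) < eta -> descendant pa k w.
Proof.
have [->|k0] := posnP k; first by exists 1 => // w _; apply: descendant0.
exists (edge k / 4) => [|w near]; first by rewrite divr_gt0 ?edge_gt0.
case: (ltngtP k w) => [kw|wk|->]; last exact: descendant_refl.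
- apply: contrapT => not_dw; have [v [dv kv vk]] := descendant_exit pa_lt kw not_dw.
  have v0 : (0 < v)%N by apply: leq_ltn_trans kv.
  have kp : k <> pa v by move=> e; move: vk; rewrite -e ltnn.
  have := edge_le_dist_earlier k0 vk; have := edge_far v0 kv kp; have := dist_descendant v0 dv.
  have := D_tri (y (pa v)) (y v) (y k); have := D_tri (y v) (y w) (y k).
  have := D_ge0 (y (pa w)) (y w); have := edge_gt0 k0.
  have := D_sym (y k) (y (pa v)); have := D_sym (y k) (y w); lra.
- by have := edge_le_dist_earlier k0 wk; have := edge_gt0 k0; lra.
Qed.

Lemma good_realizes_tree : realizes_tree pa (fun a b => D (y a) (y b)).
Proof.
split=> [k M|k e e0].
  have [eta eta0 near] := descendant_of_near k.
  have [m m0 le_m] := exists_pos_lower_bound (f := fun c => edge c)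
    (P := fun c => (0 < c)%N) (n := M.+1) (fun c _ => @edge_gt0 c).
  exists (Num.min eta (m / 2)) => [|w wk]; first by rewrite lt_min eta0 divr_gt0.
  rewrite lt_min => /andP[/near dw small].
  have [c [pc c0 dc]] := descendant_child dw wk.
  exists c; split => //; rewrite ltnNge; apply/negP => cM.
  have := le_m c (leq_ltn_trans cM (ltnSn M)) c0; have := dist_late_child pc c0 dc; lra.
have [M hM] := ltr_add_invr (y := 0) (x := e / 2) (divr_gt0 e0 (ltr0Sn R 1)).
exists M => w [c [pc Mc dc]] /=; have c0 : (0 < c)%N by apply: leq_ltn_trans Mc.
have [dw _] := dist_late_child pc c0 dc; have := edge_lt c0.
have : c.+1%:R^-1 <= M.+1%:R^-1 :> R.
  by rewrite lef_pV2 ?posrE ?ltr0n // ler_nat ltnS ltnW.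
move: hM; rewrite add0r; move: (c.+1%:R^-1) (M.+1%:R^-1) => a b; lra.
Qed.

End GoodChoice.

Lemma crowded_tree_embedding : B !=set0 -> exists y : nat -> T,
  [/\ injective y, forall n, B (y n) & realizes_tree pa (fun a b => D (y a) (y b))].
Proof.
case=> b0 Bb0.
have prefix f g n a :
    (forall j, (j < n)%N -> f j = g j) -> good_child f n a -> good_child g n a.
  move=> fg [Ba ok]; split => // n0; have [ap Da far] := ok n0.
  by rewrite -(fg _ (pa_lt n0)); split=> // j jn jp; rewrite -fg //; apply: far.
have [y y_good] := nat_rec_choice b0 prefix (good_child_exists Bb0).
by exists y; split; [exact: good_inj | by move=> n; case: (y_good n) | exact: good_realizes_tree].
Qed.

End CrowdedTree.

Section IrrationalCut.
Variable R : realType.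

Definition between (a b z : R) := (a < z /\ z < b) \/ (b < z /\ z < a).

Lemma between_sym (a b z : R) : between a b z -> between b a z.
Proof. by rewrite /between; lra. Qed.

Lemma between_shrink (a b c z : R) : between a b c -> between a c z -> between a b z.
Proof. by rewrite /between; lra. Qed.

Lemma between_split (a b z c : R) :
  between a b z -> z <> c -> between a c z \/ between c b z.
Proof. by rewrite /between => ? /eqP; rewrite neq_lt => /orP; lra. Qed.

Lemma neq_lt_or (a b : R) : a <> b -> a < b \/ b < a.
Proof. by move/eqP; rewrite neq_lt => /orP. Qed.

Definition cut_between (a b : R) := a + (b - a) / pi.

Lemma between_cut a b : a <> b -> between a b (cut_between a b).
Proof.
move=> ab; have pi1 : 1 < (pi : R) by have := @pi_ge2 R; lra.
have [t0 t1] : 0 < (pi : R)^-1 /\ (pi : R)^-1 < 1 by rewrite invr_gt0 invf_lt1 ?pi_gt0.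
rewrite /between /cut_between; case: (ltgtP a b) => [ab'|ba|//].
- have : 0 < (b - a) * (1 - pi^-1) by rewrite mulr_gt0 // subr_gt0.
  have : 0 < (b - a) * pi^-1 by rewrite mulr_gt0 // subr_gt0.
  by left; split; lra.
- have : 0 < (a - b) * (1 - pi^-1) by rewrite mulr_gt0 // subr_gt0.
  have : 0 < (a - b) * pi^-1 by rewrite mulr_gt0 // subr_gt0.
  by right; split; lra.
Qed.

Lemma cut_between_irrational (a b c : rat) :
  a <> b -> cut_between (ratr a) (ratr b) <> ratr c.
Proof.
move=> ab eq_c; apply: (@pi_irrationnal R).
have ratr_neq (u v : rat) : u <> v -> (ratr u - ratr v : R) != 0.
  by move=> uv; rewrite subr_eq0 (inj_eq (fmorph_inj _)); apply/eqP.
have ca : c <> a.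
  move=> ca; move/eqP: eq_c; rewrite ca /cut_between -subr_eq0 addrAC subrr add0r.
  by rewrite mulf_eq0 invr_eq0 (gt_eqF (@pi_gt0 R)) orbF; apply/negP/ratr_neq/nesym.
have e : (ratr b - ratr a : R) / pi = ratr c - ratr a.
  by rewrite -eq_c /cut_between addrAC subrr add0r.
exists ((b - a) / (c - a)) => //.
by rewrite fmorph_div !rmorphB /= -e invf_div mulrC divfK // ratr_neq //; apply/nesym.
Qed.

End IrrationalCut.

Section RatMarks.
Variables (R : realType) (r : nat -> rat).
Hypothesis r_inj : injective r.
Local Notation q j := (ratr (r j) : R).
Variable pa : nat -> nat.

(* The cut points are irrational, so no later rational ever lands on one. *)
Definition cut m := cut_between (q (pa m)) (q m).

Definition mark n z :=
  (exists2 j, (j < n)%N & z = q j) \/ (exists2 m, (0 < m < n)%N & z = cut m).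

Definition adjacent n p := forall z, mark n z -> ~ between (q p) (q n) z.

Definition parent_ok n p := (p < n)%N /\ adjacent n p.

Definition parents_ok n := forall m, (0 < m < n)%N -> parent_ok m (pa m).

Lemma markS n z :
  mark n.+1 z <-> [\/ mark n z, z = q n | (0 < n)%N /\ z = cut n].
Proof.
split=> [[[j jn ->]|[m /andP[m0 mn] ->]]|[[[j jn ->]|[m /andP[m0 mn] ->]]|->|[n0 ->]]].
- move: jn; rewrite ltnS leq_eqVlt => /orP[/eqP->|jn]; first by constructor 2.
  by constructor 1; left; exists j.
- move: mn; rewrite ltnS leq_eqVlt => /orP[/eqP mn|mn]; first by subst m; constructor 3.
  by constructor 1; right; exists m; rewrite ?m0.
- by left; exists j; rewrite // ltnW.
- by right; exists m; rewrite ?m0 // ltnW.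
- by left; exists n; rewrite ?ltnSn.
- by right; exists n; rewrite ?n0 ?ltnSn.
Qed.

Lemma mark_mono n m z : (n <= m)%N -> mark n z -> mark m z.
Proof.
move=> nm [[j jn ->]|[k /andP[k0 kn] ->]]; first by left; exists j; rewrite // (leq_trans jn).
by right; exists k; rewrite ?k0 // (leq_trans kn).
Qed.

Lemma q_neq i j : i != j -> q i <> q j.
Proof. by move=> /eqP ij /fmorph_inj /r_inj. Qed.

Lemma cut_neq_q m i : (pa m < m)%N -> cut m <> q i.
Proof.
by move=> pm; apply: cut_between_irrational => /r_inj pmm; move: pm; rewrite pmm ltnn.
Qed.

Lemma between_parent_cut m : (pa m < m)%N -> between (q (pa m)) (q m) (cut m).
Proof. by move=> pm; apply/between_cut/q_neq; rewrite ltn_eqF. Qed.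

Lemma mark_free_nbhd n (a : R) :
  exists2 e, 0 < e & forall z, mark n z -> z <> a -> z <= a - e \/ a + e <= z.
Proof.
have sep (v : R) : exists2 e, 0 < e & v <> a -> v <= a - e \/ a + e <= v.
  case: (ltgtP v a) => [va|av|->]; last by exists 1.
  - by exists (a - v) => [|_]; lra.
  - by exists (v - a) => [|_]; lra.
elim: n => [|n [e e0 le_e]]; first by exists 1 => // z [[]|[m /andP[_]]].
have [e1 e10 le_e1] := sep (q n); have [e2 e20 le_e2] := sep (cut n).
pose m := Num.min e (Num.min e1 e2).
have [me [me1 me2]] : [/\ m <= e, m <= e1 & m <= e2] by rewrite !ge_min !lexx !orbT.
exists m => [|z /markS [zn|->|[_ ->]] za]; first by rewrite !lt_min e0 e10 e20.
- by have := le_e z zn za; lra.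
- by have := le_e1 za; lra.
- by have := le_e2 za; lra.
Qed.

Lemma mark_next_to n (a : R) : (0 < n)%N ->
  exists2 z0, mark n z0 & forall z, mark n z -> ~ between a z0 z.
Proof.
elim: n => [//|n IH] _; have [->|n0] := posnP n.
  exists (q 0); first by left; exists 0%N.
  by move=> z /markS [[[j //]|[m /andP[_ //]]]|->|[//]]; rewrite /between; lra.
have [z0 z0m free] := IH n0.
suff [z1 [z1m old qn cn]] : exists z1, [/\ mark n.+1 z1,
    forall z, ~ between a z0 z -> ~ between a z1 z,
    ~ between a z1 (q n) & ~ between a z1 (cut n)].
  by exists z1 => // z /markS [/free/old|->|[_ ->]].
have mq : mark n.+1 (q n) by apply/markS; constructor 2.
have mc : mark n.+1 (cut n) by apply/markS; constructor 3.
have [bq|bq] := pselect (between a z0 (q n)).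
  have [bc|bc] := pselect (between a (q n) (cut n)).
    by exists (cut n); split=> //; first move=> z; rewrite /between in bq bc *; lra.
  by exists (q n); split=> //; first move=> z; rewrite /between in bq bc *; lra.
have [bc|bc] := pselect (between a z0 (cut n)).
  by exists (cut n); split=> //; first move=> z; rewrite /between in bq bc *; lra.
by exists z0; split=> //; apply: mark_mono (leqnSn n) z0m.
Qed.

(* Together, [cuts_separate] and [cuts_flanked] say that in increasing order the
   marks alternate between rationals and cuts, beginning and ending with a
   rational; so [q n] always has an adjacent rational mark. *)
Definition cuts_separate n := forall i j, (i < n)%N -> (j < n)%N -> i <> j ->
  exists2 m, (0 < m < n)%N & between (q i) (q j) (cut m).

Definition cuts_flanked n := forall m (up : bool), (0 < m < n)%N ->
  exists i, [/\ (i < n)%N, if up then cut m < q i else q i < cut m &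
    forall z, mark n z -> ~ between (cut m) (q i) z].

Lemma cuts_separateS n :
  (0 < n)%N -> parents_ok n.+1 -> cuts_separate n -> cuts_separate n.+1.
Proof.
move=> n0 ok sep; have [pn adj] : parent_ok n (pa n) by apply: ok; rewrite n0 ltnSn.
have to_n j : (j < n)%N -> exists2 m, (0 < m < n.+1)%N & between (q j) (q n) (cut m).
  move=> jn; have [->|/eqP jp] := eqVneq j (pa n).
    by exists n; [rewrite n0 ltnSn | exact: between_parent_cut].
  have [m /andP[m0 mn] cm] := sep j (pa n) jn pn jp.
  have [pm _] : parent_ok m (pa m) by apply: ok; rewrite m0 ltnW.
  have mark_cm : mark n (cut m) by right; exists m; rewrite ?m0.
  have [bm|bm] := between_split cm (cut_neq_q (i := n) pm).
    by exists m; rewrite ?m0 // ltnW.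
  by case: (adj _ mark_cm); apply: between_sym.
move=> i j; rewrite ltnS leq_eqVlt => /orP[/eqP->|ilt].
all: rewrite ltnS leq_eqVlt => /orP[/eqP->|jlt] ij //.
- by have [m hm /between_sym bm] := to_n j jlt; exists m.
- exact: to_n.
- by have [m /andP[m0 mn] bm] := sep i j ilt jlt ij; exists m; rewrite ?m0 // ltnW.
Qed.

Lemma cuts_flankedS n :
  (0 < n)%N -> parents_ok n.+1 -> cuts_flanked n -> cuts_flanked n.+1.
Proof.
move=> n0 ok flank m up; have [pn adj] : parent_ok n (pa n) by apply: ok; rewrite n0 ltnSn.
have cn := between_parent_cut pn.
rewrite ltnS => /andP[m0]; rewrite leq_eqVlt => /orP[/eqP mn|mn].
  subst m; have free i :
      i = pa n \/ i = n -> forall z, mark n.+1 z -> ~ between (cut n) (q i) z.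
    by move=> hi z /markS [/adj|->|[_ ->]]; case: hi => ->; rewrite /between in cn *; lra.
  have [i [hi side]] :
      exists i, (i = pa n \/ i = n) /\ (if up then cut n < q i else q i < cut n).
    case: cn => -[lo hi]; case: up; [exists n | exists (pa n) | exists (pa n) | exists n];
      by split => //; auto.
  by exists i; split; [case: hi => ->; rewrite ltnS // ltnW | | apply: free].
have [i [ilt side ifree]] := flank m up (introT andP (conj m0 mn)).
have [pm _] : parent_ok m (pa m) by apply: ok; rewrite m0 ltnW.
have cm_adj := adj (cut m) (or_intror (ex_intro2 _ _ m (introT andP (conj m0 mn)) erefl)).
have qp_free := ifree _ (or_introl (ex_intro2 _ _ (pa n) pn erefl)).
have cmp := neq_lt_or (cut_neq_q (i := pa n) pm).
have cmn := neq_lt_or (cut_neq_q (i := n) pm).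
have [bn|bn] := pselect (between (cut m) (q i) (q n)).
  exists n; split => //; first by case: up side; rewrite /between in bn; lra.
  move=> z /markS [zm|->|[_ ->]].
  - by move=> bz; apply: (ifree z zm); apply: between_shrink bn bz.
  - by rewrite /between; lra.
  - by rewrite /between in cn cm_adj qp_free bn *; lra.
exists i; split => //; first exact: ltnW.
move=> z /markS [zm|->|[_ ->]] //; first exact: ifree.
by rewrite /between in cn cm_adj qp_free bn *; lra.
Qed.

Lemma cuts_separate_ok n : parents_ok n -> cuts_separate n.
Proof.
elim: n => [|n IH ok]; first by move=> _ i j; rewrite ltn0.
have [->|n0] := posnP n; first by move=> i j; rewrite !ltnS !leqn0 => /eqP-> /eqP->.
have ok' : parents_ok n by move=> m /andP[m0 mn]; apply: ok; rewrite m0 ltnW.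
exact: cuts_separateS n0 ok (IH ok').
Qed.

Lemma cuts_flanked_ok n : parents_ok n -> cuts_flanked n.
Proof.
elim: n => [|n IH ok]; first by move=> _ m up; rewrite ltn0 andbF.
have [->|n0] := posnP n.
  by move=> m up; rewrite ltnS leqn0 => /andP[/lt0n_neq0/negPf->].
have ok' : parents_ok n by move=> m /andP[m0 mn]; apply: ok; rewrite m0 ltnW.
exact: cuts_flankedS n0 ok (IH ok').
Qed.

Lemma parent_exists n : (0 < n)%N -> parents_ok n -> exists p, parent_ok n p.
Proof.
move=> n0 ok; have [z0 z0m free] := mark_next_to (q n) n0.
case: z0m free => [[j jn ->]|[m hm ->]] free.
  by exists j; split=> // z /free nb /between_sym.
have [pm _] := ok m hm.
have [i [ilt side ifree]] := cuts_flanked_ok ok (cut m < q n) hm.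
have qi_free := free _ (or_introl (ex_intro2 _ _ i ilt erefl)).
have cmn := neq_lt_or (cut_neq_q (i := n) pm).
have qin := neq_lt_or (q_neq (negbT (ltn_eqF ilt))).
exists i; split=> // z zm; have := ifree z zm; have := free z zm.
by move: side; case: ltP; rewrite /between in qi_free *; lra.
Qed.

Hypothesis pa_ok : forall m, (0 < m)%N -> parent_ok m (pa m).

Lemma parent_lt m : (0 < m)%N -> (pa m < m)%N.
Proof. by move/pa_ok => []. Qed.

Lemma mark_neq_late n w z : (n <= w)%N -> mark n z -> z <> q w.
Proof.
move=> nw [[j jn ->]|[m /andP[m0 _] ->]]; last exact/cut_neq_q/parent_lt.
by apply/q_neq; rewrite ltn_eqF // (leq_trans jn nw).
Qed.

Definition in_gap T k (a : R) := forall z, mark T.+1 z -> z <> q k ->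
  (z < q k -> z < a) /\ (q k < z -> a < z).

Lemma in_gap_child T k w : (T < w)%N -> in_gap T k (q (pa w)) -> in_gap T k (q w).
Proof.
move=> Tw gap z zm zk; have [_ adj] := pa_ok (leq_ltn_trans (leq0n T) Tw).
have := adj z (mark_mono Tw zm); have := neq_lt_or (mark_neq_late Tw zm).
by have := gap z zm zk; rewrite /between; lra.
Qed.

Lemma in_gap_parent T k w : (k <= T)%N -> (T < w)%N ->
  in_gap T k (q w) -> in_gap T k (q (pa w)).
Proof.
move=> kT Tw gap z zm zk; have [_ adj] := pa_ok (leq_ltn_trans (leq0n T) Tw).
have zp_free := adj z (mark_mono Tw zm).
have [zp|zp] := pselect (z = q (pa w)); last first.
  by have := neq_lt_or zp; have := gap z zm zk; rewrite /between in zp_free; lra.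
exfalso; subst z; have pT : (pa w < T.+1)%N.
  case: zm => [[j jT /fmorph_inj /r_inj ->]|[m /andP[m0 _] /esym cm]] //.
  by case: (cut_neq_q (i := pa w) (parent_lt m0)).
have pk : pa w != k by apply: contra_not_neq zk => ->.
have all_ok : parents_ok T.+1 by move=> m /andP[m0 _]; apply: pa_ok.
have [m /andP[m0 mT] bm] := cuts_separate_ok all_ok pT kT (elimN eqP pk).
have mk : mark T.+1 (cut m) by right; exists m; rewrite ?m0.
have cmk := cut_neq_q (i := k) (parent_lt m0).
have := gap _ mk cmk; have := adj _ (mark_mono Tw mk); have := neq_lt_or cmk.
by rewrite /between in bm *; lra.
Qed.

Lemma late_subtree_in_gap T k w : late_subtree pa k T w -> in_gap T k (q w).
Proof.
case=> c [<- Tc]; elim=> [|v v0 dv IH].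
  by apply: in_gap_child Tc _ => z _ _; split.
apply: in_gap_child IH; apply: leq_trans Tc _.
exact: leq_trans (descendant_leq parent_lt dv) (ltnW (parent_lt v0)).
Qed.

Lemma in_gap_late_subtree T k w : (k <= T)%N -> (T < w)%N ->
  in_gap T k (q w) -> late_subtree pa k T w.
Proof.
move=> kT; elim/ltn_ind: w => w IH Tw gap; have w0 := leq_ltn_trans (leq0n T) Tw.
have gap_p := in_gap_parent kT Tw gap.
case: (ltnP T (pa w)) => [Tp|pT].
  have [c [pc Tc dc]] := IH _ (parent_lt w0) Tp gap_p.
  by exists c; split => //; apply: descendant_step.
exists w; split => //; last exact: descendant_refl.
apply: contrapT => pk; have mp : mark T.+1 (q (pa w)) by left; exists (pa w).
have pk' := q_neq (introN eqP pk).
by have := gap_p _ mp pk'; have := neq_lt_or pk'; lra.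
Qed.

Lemma rat_realizes_tree : (forall x, exists n, r n = x) ->
  realizes_tree pa (fun a b => `|r b - r a|).
Proof.
move=> r_surj; split=> [k M|k e e0].
  pose T := maxn k M; have [e e0 far] := mark_free_nbhd T.+1 (q k).
  have [d] := @rat_in_itvoo R 0 e e0; rewrite in_itv /= => /andP[d0 de].
  exists d => [|w wk /= wd]; first by rewrite -(@ltr_rat R) rmorph0.
  have : `|q w - q k| < e by rewrite -rmorphB -ratr_norm (lt_trans _ de) // ltr_rat.
  rewrite ltr_distl => /andP[lo hi]; have wk' := q_neq (introN eqP wk).
  have Tw : (T < w)%N.
    rewrite ltnNge; apply/negP => wT.
    by have := far (q w) (or_introl (ex_intro2 _ _ w wT erefl)) wk'; lra.
  have [|c [pc Tc dc]] := in_gap_late_subtree (leq_maxl k M) Tw.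
    by move=> z zm zk; have := far z zm zk; split; lra.
  by exists c; split => //; apply: leq_ltn_trans (leq_maxr k M) Tc.
have [n1 rn1] := r_surj (r k + e / 2); have [n2 rn2] := r_surj (r k - e / 2).
exists (maxn n1 n2) => w /late_subtree_in_gap gap /=.
have m1 : mark (maxn n1 n2).+1 (q n1) by left; exists n1; rewrite // ltnS leq_maxl.
have m2 : mark (maxn n1 n2).+1 (q n2) by left; exists n2; rewrite // ltnS leq_maxr.
have [_ above] : (q n1 < q k -> q n1 < q w) /\ (q k < q n1 -> q w < q n1).
  by apply: gap => // /fmorph_inj; rewrite rn1; lra.
have [below _] : (q n2 < q k -> q n2 < q w) /\ (q k < q n2 -> q w < q n2).
  by apply: gap => // /fmorph_inj; rewrite rn2; lra.
move: above below; rewrite !ltr_rat rn1 rn2 ltr_distl; lra.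
Qed.

End RatMarks.

Lemma parent_ok_prefix (R : realType) r pa pa' n p :
  (forall j, (j < n)%N -> pa j = pa' j) -> parent_ok R r pa n p -> parent_ok R r pa' n p.
Proof.
move=> eq_pa [pn adj]; split=> // z zm; apply: adj.
case: zm => [?|[m /andP[m0 mn] ->]]; first by left.
by right; exists m; rewrite ?m0 // /cut eq_pa.
Qed.

(* [R] only hosts the irrational cut points of the construction. *)
Lemma rat_tree (R : realType) : exists (r : nat -> rat) (pa : nat -> nat),
  [/\ injective r, forall x, exists n, r n = x, forall m, (0 < m)%N -> (pa m < m)%N
    & realizes_tree pa (fun a b => `|r b - r a|)].
Proof.
have /card_set_bijP[r [_ r_inj r_surj]] := card_esym card_rat.
have {}r_inj : injective r by move=> a b; apply: r_inj; rewrite ?inE.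
have {}r_surj x : exists n, r n = x by have [n _ <-] := r_surj x I; exists n.
pose P pa n p := (0 < n)%N -> parent_ok R r pa n p.
have prefix pa pa' n p : (forall j, (j < n)%N -> pa j = pa' j) -> P pa n p -> P pa' n p.
  by move=> eq_pa ok /ok; apply: parent_ok_prefix.
have step pa n : (forall j, (j < n)%N -> P pa j (pa j)) -> exists p, P pa n p.
  move=> ok; have [->|n0] := posnP n; first by exists 0%N.
  have [|p ?] := parent_exists (R := R) (pa := pa) r_inj n0; last by exists p.
  by move=> m /andP[m0 mn]; apply: ok.
have [pa pa_ok] := nat_rec_choice 0%N prefix step.
exists r, pa; split => // [m m0|]; first by case: (pa_ok m m0).
exact: (rat_realizes_tree (R := R) r_inj pa_ok r_surj).
Qed.

Section Compatible.
Variables (R : realType) (X : topologicalType) (d : X -> X -> R).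

Lemma compatible_subset (S S' : set X) :
  S' `<=` S -> metric_on S d -> compatible S d -> compatible S' d.
Proof.
move=> S'S [_ [d_eq0 [_ d_tri]]] comp U US'; split.
  case=> V [oV ->] u [Vu S'u]; have VS : V `&` S `<=` S by move=> z [].
  have [e [e0 ball]] := (comp _ VS).1 (ex_intro _ V (conj oV erefl)) u (conj Vu (S'S _ S'u)).
  by exists e; split => // s S's dus; split => //; apply: (ball s (S'S _ S's) dus).1.
move=> U_open.
pose U' := [set s | S s /\ exists u e, [/\ U u, 0 < e,
  forall s', S' s' -> d u s' < e -> U s' & d u s < e]].
have U'S : U' `<=` S by move=> s [].
have [V [oV eV]] : rel_open S U'.
  apply/(comp _ U'S) => s [Ss [u [e [Uu e0 ball dus]]]].
  exists (e - d u s); split => [|s' Ss' ds']; first by lra.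
  split => //; exists u, e; split => //.
  by have := d_tri u s s' (S'S _ (US' _ Uu)) Ss Ss'; lra.
exists V; split => //; apply/seteqP; split => [z Uz|z [Vz S'z]].
  have Sz := S'S _ (US' _ Uz); have [e [e0 ball]] := U_open z Uz.
  have : U' z by split => //; exists z, e; rewrite (d_eq0 z z Sz Sz).2.
  by rewrite eV => -[Vz _]; split => //; apply: US'.
have : U' z by rewrite eV; split => //; apply: S'S.
by case=> _ [u [e [Uu e0 ball duz]]]; apply: ball.
Qed.

Lemma homeo_Q_range (phi : nat -> X) (r : nat -> rat) :
  compatible (range phi) d -> injective phi ->
  injective r -> (forall q, exists n, r n = q) ->
  (forall k e, 0 < e -> exists2 e', 0 < e' &
     forall w, `|r w - r k| < e' -> d (phi k) (phi w) < e) ->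
  (forall k e, 0 < e -> exists2 e', 0 < e' &
     forall w, d (phi k) (phi w) < e' -> `|r w - r k| < e) ->
  homeo_Q (range phi).
Proof.
move=> comp phi_inj r_inj r_surj phi_cont r_cont.
have [idx idxK] := choice r_surj.
have idx_r n : idx (r n) = n by apply: r_inj; rewrite idxK.
pose f z := r (xget 0%N [set n | phi n = z]).
have fE n : f (phi n) = r n.
  by congr r; apply: phi_inj; apply: (xgetPex 0%N (P := [set m | phi m = phi n])); exists n.
exists f, (phi \o idx); split; [|split; [|split]].
- by move=> _ [n _ <-]; rewrite fE /= idx_r.
- by move=> q; split; [exists (idx q) | rewrite /= fE idxK].
- move=> U U_open; apply/comp => [_ []//|_ [[k _ <-]]]; rewrite /= fE => Urk.
  have [del [del0 ball]] := U_open _ Urk; have [e e0 near] := r_cont k del del0.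
  by exists e; split => // _ [w _ <-] /near dw; split; [exists w | rewrite /= fE; apply: ball].
- move=> U U_open US q Uq; have [e [e0 ball]] := (comp _ US).1 U_open _ Uq.
  have [del del0 near] := phi_cont (idx q) e e0.
  exists del; split => // q' dq; apply: ball; first by exists (idx q').
  by apply: near; rewrite !idxK.
Qed.

End Compatible.

Section Scattered.
Variables (R : realType) (X : topologicalType) (x : nat -> X) (d : X -> X -> R).
Hypothesis x_inj : injective x.
Hypothesis d_metric : metric_on (range x) d.
Hypothesis d_compatible : compatible (range x) d.

Let D a b := d (x a) (x b).

Let D_ge0 a b : 0 <= D a b.
Proof. by case: d_metric => + _; apply; apply: imageT. Qed.

Let D_sym a b : D a b = D b a.
Proof. by case: d_metric => _ [_ [+ _]]; apply; apply: imageT. Qed.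

Let D_tri a b c : D a c <= D a b + D b c.
Proof. by case: d_metric => _ [_ [_ +]]; apply; apply: imageT. Qed.

Let D_eq0 a b : D a b = 0 <-> a = b.
Proof.
case: d_metric => _ [+ _] => /(_ (x a) (x b) (imageT x a) (imageT x b)) ->.
by split => [/x_inj|->].
Qed.

Lemma crowded_homeo_Q B : B !=set0 -> crowded D B -> exists2 C, C `<=` B & homeo_Q (x @` C).
Proof.
move=> B0 B_crowded; have [r [pa [r_inj r_surj pa_lt Q_tree]]] := rat_tree R.
have [y [y_inj yB Y_tree]] := crowded_tree_embedding D_ge0 D_sym D_tri D_eq0 B_crowded pa_lt B0.
exists (range y); first by move=> _ [n _ <-].
rewrite image_comp; apply: homeo_Q_range r_inj r_surj _ _.
- by apply: compatible_subset d_metric d_compatible => _ [n _ <-]; exists (y n).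
- exact: inj_comp.
- by apply: realizes_tree_continuous Q_tree Y_tree _ => k; apply/D_eq0.
- by apply: realizes_tree_continuous Y_tree Q_tree _ => k; rewrite subrr normr0.
Qed.

Lemma homeo_Q_crowded B : homeo_Q (x @` B) -> B !=set0 /\ crowded D B.
Proof.
case=> f [g [gf [fg [_ g_open]]]]; split; first by have [[a Ba _] _] := fg 0; exists a.
move=> i Bi e e0; apply: contrapT => isolated.
have xB_x : x @` B `<=` range x by move=> _ [n _ <-]; exists n.
have comp := compatible_subset xB_x d_metric d_compatible.
have U_open : rel_open (x @` B) [set x i].
  apply/comp => [_ ->//|_ ->].
  exists e; split => // _ [n Bn <-] dn; have [->//|ni] := pselect (n = i).
  by case: isolated; exists n.
have xi_in : (x @` B) (x i) by exists i.
have U_sub : [set x i] `<=` x @` B by move=> _ ->.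
have [e' [e'0 ball]] := g_open _ U_open U_sub (f (x i)) (gf _ xi_in).
have := ball (f (x i) + e' / 2); rewrite addrAC subrr add0r ger0_norm ?divr_ge0 ?ltW //.
move=> /(_ ltac:(lra)) /= gx; have := (fg (f (x i) + e' / 2)).2; rewrite gx; lra.
Qed.

Lemma crowdedE B : crowded D B <->
  forall i, B i -> forall j : nat, exists n, (B `&` Aij x d i j) n /\ n <> i.
Proof.
split=> [B_crowded i Bi j|B_crowded i Bi e e0].
  have [n [Bn ni Din]] : exists n, [/\ B n, n <> i & D i n < j.+1%:R^-1].
    by apply: B_crowded; rewrite // invr_gt0.
  by exists n; split => //; split => //; rewrite /Aij /= -/(D n i) D_sym.
have [j hj] := ltr_add_invr (y := 0) e0; rewrite add0r in hj.
have [n [[Bn Dni] ni]] := B_crowded i Bi j.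
by exists n; split => //; rewrite D_sym; apply: lt_trans hj.
Qed.

Lemma not_scatteredE A : ~ scattered x A <-> exists B, [/\ B `<=` A, B !=set0 & crowded D B].
Proof.
split=> [/contrapT [B [BA /homeo_Q_crowded [B0 Bc]]]|[B [BA B0 Bc]] [] ]; first by exists B.
by have [C CB hC] := crowded_homeo_Q B0 Bc; exists C; split => //; apply: subset_trans BA.
Qed.

Lemma Aij_center i j : Aij x d i j i.
Proof. by rewrite /Aij /= -/(D i i) (D_eq0 i i).2 // invr_gt0. Qed.

Lemma crowded_ball B i j : crowded D B -> crowded D (B `&` Aij x d i j).
Proof.
move=> B_crowded k [Bk Dki] e e0; rewrite /Aij /= -/(D k i) in Dki.
pose e' := Num.min e (j.+1%:R^-1 - D k i).
have [e'e e'0] : e' <= e /\ 0 < e' by rewrite ge_min lexx lt_min e0 subr_gt0.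
have [n [Bn nk Dkn]] := B_crowded k Bk e' e'0.
exists n; split => //; last exact: lt_le_trans Dkn e'e.
split=> //; rewrite /Aij /= -/(D n i).
have : e' <= j.+1%:R^-1 - D k i by rewrite ge_min lexx orbT.
by have := D_tri n k i; rewrite (D_sym n k); move: (j.+1%:R^-1) => rho; lra.
Qed.

End Scattered.

Unset Implicit Arguments.

Theorem mainTheorem1 (R : realType) (X : topologicalType) (x : nat -> X)
  (d : X -> X -> R)
  (x_inj : injective x)
  (hQ : homeo_Q (range x))
  (hd : metric_on (range x) d)
  (hcomp : compatible (range x) d) :
  (forall A : set nat,
     ~ scattered x A <->
     exists B : set nat, B `<=` A /\ B !=set0 /\
       forall i, B i -> forall j : nat,
         exists n, (B `&` Aij x d i j) n /\ n <> i) /\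
  (forall A : set nat, ~ scattered x A ->
     exists B : set nat, B `<=` A /\ ~ scattered x B /\
       forall i, B i -> forall j : nat, ~ scattered x (B `&` Aij x d i j)).
Proof.
have scatteredE := not_scatteredE x_inj hd hcomp.
have crowdedE := crowdedE hd.
split=> [A|A /scatteredE [B [BA B0 Bc]]].
  rewrite scatteredE.
  by split=> [[B [BA B0 /crowdedE Bc]]|[B [BA [B0 /crowdedE Bc]]]]; exists B.
exists B; split=> //; split=> [|i Bi j]; first by apply/scatteredE; exists B; split.
apply/scatteredE; exists (B `&` Aij x d i j); split; [by move=> n [] | | exact: crowded_ball].
by exists i; split=> //; apply: Aij_center.
Qed.
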